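(* Let $(\mathfrak g,\mathfrak l,\tau)$ be a pseudo-symmetric triple whose decorated Dynkin diagram violates the selection rules. Then $\tau$ restricts to the identity on $D_0$.
   Context: Setting and notation as follows. $\mathfrak g$ is one of $\mathfrak{gl}(N|2\mathbf m)$, $\mathfrak{osp}(2\mathbf n+1|2\mathbf m)$, $\mathfrak{osp}(2\mathbf n|2\mathbf m)$, $\mathfrak{spo}(2\mathbf n|2\mathbf m)$ with natural module $V=\mathbb C^{N|2\mathbf m}$, homogeneous weight basis $v_i$ of weights $\zeta_i$, $|v_i|=1$ iff $i\le\mathbf m$ or $i>\mathbf m+N$; standard form $(\varepsilon_i,\varepsilon_j)=\delta_{ij}=-(\delta_i,\delta_j)$, $(\varepsilon_i,\delta_j)=0$; standard simple roots $\Pi=\{\alpha_1,\dots,\alpha_n\}$ in the order $\delta_1-\delta_2,\dots,\delta_{\mathbf m}-\varepsilon_1,\varepsilon_1-\varepsilon_2,\dots$ followed for $\mathfrak{gl}$ by $\varepsilon_N-\delta_{\mathbf m+1},\dots,\delta_{2\mathbf m-1}-\delta_{2\mathbf m}$ and for the ortho-symplectic cases ending with the tail root $\varepsilon_{\mathbf n}$, resp. $\varepsilon_{\mathbf n-1}+\varepsilon_{\mathbf n}$ (for $\mathbf n=1$: $\delta_{\mathbf m}\pm\varepsilon_1$), resp. $2\varepsilon_{\mathbf n}$; adjacency = nonzero inner product. Levi data, $w_{\mathfrak l}$, admissibility and pseudo-symmetric triples: $\mathfrak l$ generated by $e_{\pm\alpha}$, $\alpha\in\Pi_{\mathfrak l}$;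 each component $\mathfrak l_i$ acts naturally on the span of $v_{j_1},..,v_{j_r}$ ($j_1<..<j_r$); $w_{\mathfrak l_i}:\zeta_{j_s}\mapsto\zeta_{j_{r+1-s}}$ fixing other $\zeta_j$, $w_{\mathfrak l}=\prod w_{\mathfrak l_i}$; admissible = induced grading on each such span symmetric with minimal number of odd simple roots of its $\mathfrak{gl}$-extension (type A) or of $\mathfrak l_i$; $\tau$ an even Dynkin diagram automorphism of $\Pi$ equal to $-w_{\mathfrak l}$ on $\Pi_{\mathfrak l}$ with, for $\tilde\mu=w_{\mathfrak l}\tau(\mu)$, $(\mu+\tilde\mu,\alpha)=0$, $(\mu+\tilde\mu,\nu-\tilde\nu)=0$ ($\mu,\nu\in\bar\Pi_{\mathfrak l}=\Pi\setminus\Pi_{\mathfrak l}$, $\alpha\in\Pi_{\mathfrak l}$). $D_0\subset\Pi$ is obtained by removing the two last simple roots $\alpha_{n-1},\alpha_n$ if $\mathfrak g=\mathfrak{osp}(2\mathbf n|2\mathbf m)$ (including $\mathbf n=1$), the last root $\alpha_n$ if $\mathfrak g=\mathfrak{osp}(2\mathbf n+1|2\mathbf m)$ or $\mathfrak{spo}(2\mathbf n|2\mathbf m)$, and $D_0=\Pi$ for $\mathfrak{gl}$. The decorated diagram violates the selection rules if one of the following configurations occurs (orientation arbitrary): (F1) $\beta\in\bar\Pi_{\mathfrak l}$, $\alpha\in\Pi_{\mathfrak l}$ both even, $\tau(\beta)=\beta$, $(\alpha,\beta)\ne0$, $\{\alpha\}$ a connected component of $\Pi_{\mathfrak l}$ and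 the only element of $\Pi_{\mathfrak l}$ adjacent to $\beta$; (F2) $\alpha,\beta\in\bar\Pi_{\mathfrak l}$, $\beta$ odd with $(\beta,\beta)=0$, $\tau(\beta)=\beta$, $\beta$ not adjacent to $\Pi_{\mathfrak l}$, $(\alpha,\beta)\ne0$; (F3) $\alpha,\gamma\in\Pi_{\mathfrak l}$ even, $\beta\in\bar\Pi_{\mathfrak l}$ odd, $\sigma\in\bar\Pi_{\mathfrak l}$ even, $(\alpha,\beta),(\beta,\gamma),(\gamma,\sigma)\ne0$, $(\alpha,\gamma)=(\alpha,\sigma)=(\beta,\sigma)=0$, $\{\alpha\},\{\gamma\}$ components of $\Pi_{\mathfrak l}$ and the only elements of $\Pi_{\mathfrak l}$ adjacent to $\beta$, $\tau(\beta)=\beta$, $\tau(\sigma)=\sigma$; (F4) $\mathfrak g=\mathfrak{osp}(2\mathbf n|2\mathbf m)$, $\beta=\delta_{\mathbf m}-\varepsilon_1\in\bar\Pi_{\mathfrak l}$ with $\tau(\beta)=\beta$ and either (a) $\beta=\alpha_{n-3}$, $\alpha_{n-4},\alpha_{n-2}\in\Pi_{\mathfrak l}$ forming singleton components, $\alpha_{n-1},\alpha_n\in\bar\Pi_{\mathfrak l}$ swapped by $\tau$, or (b) $\beta=\alpha_{n-2}$, $\alpha_{n-3}\in\Pi_{\mathfrak l}$, exactly one tail root $\gamma\in\{\alpha_{n-1},\alpha_n\}$ in $\Pi_{\mathfrak l}$, $\{\alpha_{n-3}\},\{\gamma\}$ singleton components, and the other tail root fixed by $\tau$. *)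

From HB Require Import structures.
From mathcomp Require Import all_boot all_order all_algebra.
Set Implicit Arguments. Unset Strict Implicit. Unset Printing Implicit Defensive.
Import GRing.Theory Num.Theory.

Inductive sakind := GL | OSPodd | OSPeven | SPO.

(* sa_n = N for gl(N|2m), = bold n otherwise; sa_m = bold m *)
Record superalg := SuperAlg { sa_kind : sakind; sa_n : nat; sa_m : nat }.

Definition dimV (g : superalg) : nat :=
  match sa_kind g with
  | GL => sa_n g + 2 * sa_m g
  | OSPodd => (2 * sa_n g).+1 + 2 * sa_m g
  | _ => 2 * sa_n g + 2 * sa_m g
  end.

Definition Neven (g : superalg) : nat := dimV g - 2 * sa_m g.

Definition rk (g : superalg) : nat :=
  match sa_kind g with GL => (dimV g).-1 | _ => sa_m g + sa_n g end.

(* number of coordinates (delta_i, eps_j) of the weight lattice *)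
Definition ncoord (g : superalg) : nat :=
  match sa_kind g with GL => dimV g | _ => sa_m g + sa_n g end.

Definition is_gl (g : superalg) : bool := if sa_kind g is GL then true else false.

(* parity of v_j (indices 1..dimV) *)
Definition vodd (g : superalg) (j : nat) : bool :=
  (j <= sa_m g) || (sa_m g + Neven g < j).

(* weights: integer coordinate vectors; coordinate c (0-based) is the
   coefficient of the weight of v_(c+1) (a delta or an eps). *)
Definition weight := nat -> int.
Definition wadd (x y : weight) : weight := fun c => (x c + y c)%R.
Definition wopp (x : weight) : weight := fun c => (- x c)%R.
Definition wsub (x y : weight) : weight := fun c => (x c - y c)%R.
Definition ebasis (c : nat) : weight := fun c' => if c' == c then 1%R else 0%R.
Definition weq (g : superalg) (x y : weight) : Prop :=
  forall c, c < ncoord g -> x c = y c.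

(* zeta_j, the weight of v_j *)
Definition zeta (g : superalg) (j : nat) : weight :=
  if j <= ncoord g then ebasis j.-1
  else if dimV g + 1 == 2 * j then (fun _ => 0%R)
  else wopp (ebasis (dimV g - j)).

(* the standard form: (eps_i,eps_j) = delta_ij = -(delta_i,delta_j) *)
Definition ip (g : superalg) (x y : weight) : int :=
  (\sum_(c < ncoord g) (if vodd g c.+1 then -1 else 1) * x c * y c)%R.

(* simple root alpha_k = zeta_a - zeta_b with (a,b) = apair g k *)
Definition apair (g : superalg) (k : nat) : nat * nat :=
  match sa_kind g with
  | OSPeven => if k == rk g then (k.-1, k.+1) else (k, k.+1)
  | _ => (k, k.+1)
  end.

Definition alpha (g : superalg) (k : nat) : weight :=
  wsub (zeta g (apair g k).1) (zeta g (apair g k).2).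

(* parity of alpha_k (true = odd) *)
Definition rpar (g : superalg) (k : nat) : bool :=
  vodd g (apair g k).1 (+) vodd g (apair g k).2.

Definition inR (g : superalg) (k : nat) : bool := (1 <= k <= rk g).
(* Pi_l is given by a predicate L on indices; Pi_l = {alpha_k | inL k} *)
Definition inL (g : superalg) (L : nat -> bool) (k : nat) : bool := inR g k && L k.
Definition inLbar (g : superalg) (L : nat -> bool) (k : nat) : bool := inR g k && ~~ L k.

Definition adj (g : superalg) (i j : nat) : bool :=
  (i != j) && (ip g (alpha g i) (alpha g j) != 0%R).

Fixpoint reach (e : nat -> nat -> bool) (dom : seq nat) (n i j : nat) : bool :=
  if n is n'.+1 then (i == j) || has (fun k => e i k && reach e dom n' k j) dom
  else i == j.

(* i and j lie in the same connected component of Pi_l *)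
Definition sameC (g : superalg) (L : nat -> bool) (i j : nat) : bool :=
  inL g L i && inL g L j &&
  reach (adj g) [seq k <- iota 1 (rk g) | L k] (rk g) i j.

(* the component of i contains the tail (is of ortho-symplectic type) *)
Definition compTail (g : superalg) (L : nat -> bool) (i : nat) : bool :=
  match sa_kind g with
  | GL => false
  | OSPeven => sameC g L i (rk g).-1 && sameC g L i (rk g)
  | _ => sameC g L i (rk g)
  end.

(* v_j belongs to the span on which the component of i acts naturally *)
Definition inspan (g : superalg) (L : nat -> bool) (i j : nat) : bool :=
  if compTail g L i then
    has (fun k => sameC g L i k && (k <= j <= dimV g + 1 - k)) (iota 1 (rk g))
  else
    has (fun k => sameC g L i k && ((j == (apair g k).1) || (j == (apair g k).2)))
        (iota 1 (rk g)).

Definition spanseq (g : superalg) (L : nat -> bool) (i : nat) : seq nat :=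
  [seq j <- iota 1 (dimV g) | inspan g L i j].

Definition span_rev (g : superalg) (L : nat -> bool) (i j : nat) : nat :=
  nth 0 (rev (spanseq g L i)) (index j (spanseq g L i)).

Definition dualidx (g : superalg) (j : nat) : nat := dimV g + 1 - j.

(* image of zeta_j under w_{l_i} (linear extension of zeta_{j_s} |-> zeta_{j_{r+1-s}}) *)
Definition wimg (g : superalg) (L : nat -> bool) (i j : nat) : weight :=
  if inspan g L i j then zeta g (span_rev g L i j)
  else if ~~ is_gl g && inspan g L i (dualidx g j)
  then wopp (zeta g (span_rev g L i (dualidx g j)))
  else zeta g j.

Definition wcomp (g : superalg) (L : nat -> bool) (i : nat) (x : weight) : weight :=
  fun c => (\sum_(c' < ncoord g) x c' * wimg g L i c'.+1 c)%R.

Definition isrep (g : superalg) (L : nat -> bool) (i : nat) : bool :=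
  inL g L i && ~~ has (sameC g L i) (iota 1 i.-1).

(* w_l = product of the w_{l_i} over the components *)
Definition wL (g : superalg) (L : nat -> bool) (x : weight) : weight :=
  foldr (fun i y => if isrep g L i then wcomp g L i y else y) x (iota 1 (rk g)).

(* number of odd simple roots in a parity sequence (of the span) *)
Definition changes (q : seq bool) : nat :=
  count (fun ab : bool * bool => ab.1 != ab.2) (zip q (behead q)).

(* number of odd simple roots of the Dynkin diagram of l_i (resp. of the gl
   extension) determined by the symmetric parity sequence q of its span *)
Definition oddcnt (g : superalg) (L : nat -> bool) (i : nat) (q : seq bool) : nat :=
  if ~~ compTail g L i then changes q else
  match sa_kind g with
  | GL => changes q
  | OSPodd => changes (take (size q).+1./2 q)
  | _ => let h := (size q)./2 in let hq := take h q in
         changes hq +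
         nat_of_bool ((last false hq == (if sa_kind g is SPO then true else false))
                      && (nth false hq (h - 2) != nth false hq h.-1))
  end.

Definition adm_comp (g : superalg) (L : nat -> bool) (i : nat) : Prop :=
  let p := [seq vodd g j | j <- spanseq g L i] in
  p = rev p /\
  forall q : seq bool, perm_eq q p -> q = rev q -> oddcnt g L i p <= oddcnt g L i q.

Definition admissible (g : superalg) (L : nat -> bool) : Prop :=
  forall i, isrep g L i -> adm_comp g L i.

Definition even_diag_aut (g : superalg) (tau : nat -> nat) : Prop :=
  (forall k, inR g k -> inR g (tau k)) /\
  (forall i j, inR g i -> inR g j -> tau i = tau j -> i = j) /\
  (forall i j, inR g i -> inR g j ->
     ip g (alpha g (tau i)) (alpha g (tau j)) = ip g (alpha g i) (alpha g j)) /\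
  (forall k, inR g k -> rpar g (tau k) = rpar g k).

Definition tilde (g : superalg) (L : nat -> bool) (tau : nat -> nat) (k : nat) : weight :=
  wL g L (alpha g (tau k)).

Definition pseudo_symmetric (g : superalg) (L : nat -> bool) (tau : nat -> nat) : Prop :=
  admissible g L /\ even_diag_aut g tau /\
  (forall k, inL g L k -> weq g (alpha g (tau k)) (wopp (wL g L (alpha g k)))) /\
  (forall mu a, inLbar g L mu -> inL g L a ->
     ip g (wadd (alpha g mu) (tilde g L tau mu)) (alpha g a) = 0%R) /\
  (forall mu nu, inLbar g L mu -> inLbar g L nu ->
     ip g (wadd (alpha g mu) (tilde g L tau mu))
          (wsub (alpha g nu) (tilde g L tau nu)) = 0%R).

Definition singleton (g : superalg) (L : nat -> bool) (a : nat) : Prop :=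
  inL g L a /\ forall k, inL g L k -> ~~ adj g a k.

Definition F1 (g : superalg) (L : nat -> bool) (tau : nat -> nat) : Prop :=
  exists b a, inLbar g L b /\ inL g L a /\ ~~ rpar g b /\ ~~ rpar g a /\
    tau b = b /\ ip g (alpha g a) (alpha g b) != 0%R /\ singleton g L a /\
    (forall k, inL g L k -> adj g b k -> k = a).

Definition F2 (g : superalg) (L : nat -> bool) (tau : nat -> nat) : Prop :=
  exists a b, inLbar g L a /\ inLbar g L b /\ rpar g b /\
    ip g (alpha g b) (alpha g b) = 0%R /\ tau b = b /\
    (forall k, inL g L k -> ~~ adj g b k) /\
    ip g (alpha g a) (alpha g b) != 0%R.

(* alpha = a, beta = b, gamma = c, sigma = s *)
Definition F3 (g : superalg) (L : nat -> bool) (tau : nat -> nat) : Prop :=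
  exists a b c s,
    inL g L a /\ inL g L c /\ ~~ rpar g a /\ ~~ rpar g c /\
    inLbar g L b /\ rpar g b /\ inLbar g L s /\ ~~ rpar g s /\
    ip g (alpha g a) (alpha g b) != 0%R /\ ip g (alpha g b) (alpha g c) != 0%R /\
    ip g (alpha g c) (alpha g s) != 0%R /\ ip g (alpha g a) (alpha g c) = 0%R /\
    ip g (alpha g a) (alpha g s) = 0%R /\ ip g (alpha g b) (alpha g s) = 0%R /\
    singleton g L a /\ singleton g L c /\
    (forall k, inL g L k -> adj g b k -> k = a \/ k = c) /\
    tau b = b /\ tau s = s.

Definition F4 (g : superalg) (L : nat -> bool) (tau : nat -> nat) : Prop :=
  let r := rk g in let b := sa_m g in   (* alpha_b = delta_m - eps_1 *)
  (sa_kind g = OSPeven /\ inLbar g L b /\ tau b = b) /\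
  (
    (b = r - 3 /\ singleton g L (r - 4) /\ singleton g L (r - 2) /\
     inLbar g L r.-1 /\ inLbar g L r /\ tau r.-1 = r /\ tau r = r.-1)
  \/
    (b = r - 2 /\ inL g L (r - 3) /\
     exists c d, ((c = r.-1 /\ d = r) \/ (c = r /\ d = r.-1)) /\
       inL g L c /\ inLbar g L d /\ singleton g L (r - 3) /\ singleton g L c /\
       tau d = d)).

Definition violates_selection_rules (g : superalg) (L : nat -> bool)
  (tau : nat -> nat) : Prop :=
  F1 g L tau \/ F2 g L tau \/ F3 g L tau \/ F4 g L tau.

(* D_0 (as a set of indices of simple roots) *)
Definition inD0 (g : superalg) (k : nat) : bool :=
  match sa_kind g with
  | GL => 1 <= k <= rk g
  | OSPeven => 1 <= k <= rk g - 2
  | _ => 1 <= k <= rk g - 1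
  end.

(* An even automorphism tau of the diagram preserves the inner products of the simple
   roots, hence the graph of the chain alpha_k = zeta_k - zeta_(k+1); as soon as two
   adjacent nodes of the chain are fixed, the whole chain is fixed.  For the
   ortho-symplectic algebras such a pair inside D_0 exists for every tau: the tail root
   of osp(2n+1|2m) and spo(2n|2m) is the only simple root of its square length, and its
   unique neighbour follows; in osp(2n|2m) the odd root delta_m - eps_1 is fixed by
   parity when n >= 2, the isotropic pair delta_m -+ eps_1 is preserved when n = 1, and
   the neighbouring roots delta_k - delta_(k+1), the only ones of square length -2,
   are then forced.  For gl(N|2m) the violated selection rule supplies the pair.  In
   (F1) and (F3) a singleton component {alpha} of Pi_l is fixed, because w_l swaps the
   two weights of alpha, so tau(alpha) = -w_l(alpha) = alpha, and alpha is adjacent to a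
   fixed beta.  In (F2) tau cannot send the neighbour nu = alpha_(b-1) of the isolated
   odd fixed root beta = alpha_b to alpha_(b+1), since (beta + beta~, nu - nu~) would
   then be nonzero.  (F4) only occurs for osp(2n|2m). *)

From mathcomp Require Import all_boot all_order all_algebra.
From mathcomp Require Import zify ring.
Set Implicit Arguments. Unset Strict Implicit. Unset Printing Implicit Defensive.
Import GRing.Theory Num.Theory.

Ltac case_eqs := repeat (case: eqP => ?; try (exfalso; lia)).

Section Sums.
Local Open Scope ring_scope.
Variable R : nmodType.

Lemma sum_ord_single n (F : nat -> R) p : (p < n)%N ->
  (forall c, (c < n)%N -> c != p -> F c = 0) -> \sum_(c < n) F c = F p.
Proof.
move=> Hp H; rewrite (bigD1 (Ordinal Hp)) //= big1 ?addr0 // => i Hi.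
by apply: H => //; apply: contra Hi => /eqP Hip; apply/eqP/val_inj.
Qed.

Lemma sum_ord_pair n (F : nat -> R) p q : (p < n)%N -> (q < n)%N -> p != q ->
  (forall c, (c < n)%N -> c != p -> c != q -> F c = 0) ->
  \sum_(c < n) F c = F p + F q.
Proof.
move=> Hp Hq Hpq H; rewrite (bigD1 (Ordinal Hp)) //= (bigD1 (Ordinal Hq)) /=; last first.
  by apply: contra Hpq => /eqP [->].
by rewrite big1 ?addr0 // => i /andP [Hi1 Hi2]; apply: H.
Qed.

End Sums.

Lemma reach_step_first (e : rel nat) dom n i j : reach e dom n i j ->
  i = j \/ exists2 k, k \in dom & e i k.
Proof.
case: n => [|n] /=; first by move/eqP; left.
case/orP => [/eqP|/hasP [k Hk /andP [Hik _]]]; first by left.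
by right; exists k.
Qed.

Lemma reach_step_last (e : rel nat) dom n i j : i \in dom -> reach e dom n i j ->
  i = j \/ exists2 k, k \in dom & e k j.
Proof.
elim: n i => [|n IH] i Hi /=; first by move/eqP; left.
case/orP => [/eqP|/hasP [k Hk /andP [Hik Hr]]]; first by left.
by case: (IH k Hk Hr) => [<-|[k' H1 H2]]; right; [exists i | exists k'].
Qed.

Lemma sameC_inL g L i k : sameC g L i k -> inL g L k.
Proof. by case/andP => /andP []. Qed.

Definition coord_sign (g : superalg) (c : nat) : int :=
  if vodd g c.+1 then (-1)%R else 1%R.

Definition path_node (g : superalg) (c : nat) : Prop :=
  forall j, inR g j -> adj g j c -> j = c.-1 \/ j = c.+1.

Definition isolated (g : superalg) (L : nat -> bool) (a : nat) : Prop :=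
  forall k, inL g L k -> ~~ adj g a k.

Section Roots.
Local Open Scope ring_scope.
Variable g : superalg.
Local Notation sg := (coord_sign g).

Lemma coord_sign_neq0 c : sg c != 0.
Proof. by rewrite /coord_sign; case: (vodd g _). Qed.

Lemma zeta_coord j c : (1 <= j <= ncoord g)%N -> zeta g j c = if c == j.-1 then 1 else 0.
Proof. by case/andP=> _ Hj; rewrite /zeta Hj. Qed.

Lemma apair_gen k : (k < ncoord g)%N -> apair g k = (k, k.+1).
Proof.
rewrite /apair /ncoord /rk; case: (sa_kind g) => // H.
by rewrite ifF //; apply/negbTE; rewrite neq_ltn H.
Qed.

Lemma alpha_gen k c : (1 <= k)%N -> (k < ncoord g)%N ->
  alpha g k c = (if c == k.-1 then 1 else 0) - (if c == k then 1 else 0).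
Proof.
by move=> H1 H2; rewrite /alpha apair_gen //= /wsub /zeta (ltnW H2) H2 /ebasis.
Qed.

Lemma rpar_gen_sign k : (1 <= k)%N -> (k < ncoord g)%N -> rpar g k ->
  sg k = - sg k.-1.
Proof.
move=> H1 H2; rewrite /rpar apair_gen //= /coord_sign prednK //.
by case: (vodd g k); case: (vodd g k.+1).
Qed.

Lemma ip_sym x y : ip g x y = ip g y x.
Proof. by apply: eq_bigr => i _; rewrite mulrAC. Qed.

Lemma ip_single x y p : (p < ncoord g)%N ->
  (forall c, (c < ncoord g)%N -> c != p -> x c = 0) ->
  ip g x y = sg p * x p * y p.
Proof.
move=> Hp H; rewrite /ip (@sum_ord_single _ _ (fun c => sg c * x c * y c) p) //.
by move=> c Hc H1; rewrite H // mulr0 mul0r.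
Qed.

Lemma ip_pair x y p q : (p < ncoord g)%N -> (q < ncoord g)%N -> p != q ->
  (forall c, (c < ncoord g)%N -> c != p -> c != q -> x c = 0) ->
  ip g x y = sg p * x p * y p + sg q * x q * y q.
Proof.
move=> Hp Hq Hpq H; rewrite /ip (@sum_ord_pair _ _ (fun c => sg c * x c * y c) p q) //.
by move=> c Hc H1 H2; rewrite H // mulr0 mul0r.
Qed.

Lemma ip_alpha_gen k y : (1 <= k)%N -> (k < ncoord g)%N ->
  ip g (alpha g k) y = sg k.-1 * y k.-1 - sg k * y k.
Proof.
move=> H1 H2; rewrite (@ip_pair _ _ k.-1 k); try lia.
- by rewrite !alpha_gen //; case_eqs; ring.
- by move=> c _ Hc1 Hc2; rewrite alpha_gen // (negbTE Hc1) (negbTE Hc2) subrr.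
Qed.

Lemma ip_alpha_self k : (1 <= k)%N -> (k < ncoord g)%N ->
  ip g (alpha g k) (alpha g k) = sg k.-1 + sg k.
Proof. by move=> *; rewrite ip_alpha_gen ?alpha_gen //; case_eqs; ring. Qed.

Lemma ip_alpha_succ k : (1 <= k)%N -> (k.+1 < ncoord g)%N ->
  ip g (alpha g k) (alpha g k.+1) = - sg k.
Proof.
by move=> *; rewrite ip_sym ip_alpha_gen ?alpha_gen //; try lia; case_eqs; ring.
Qed.

Lemma ip_alpha_far j c : (1 <= j)%N -> (j < ncoord g)%N ->
  (1 <= c)%N -> (c < ncoord g)%N ->
  j != c -> j != c.-1 -> j != c.+1 -> ip g (alpha g j) (alpha g c) = 0.
Proof. by move=> *; rewrite ip_sym ip_alpha_gen // !alpha_gen //; case_eqs; ring. Qed.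

Lemma adj_sym i j : adj g i j = adj g j i.
Proof. by rewrite /adj eq_sym ip_sym. Qed.

Lemma adj_alpha_succ k : (1 <= k)%N -> (k.+1 < ncoord g)%N -> adj g k k.+1.
Proof.
move=> H1 H2; rewrite /adj ip_alpha_succ // oppr_eq0 coord_sign_neq0 andbT.
by rewrite neq_ltn ltnSn.
Qed.

Lemma adj_alpha_pred k : (2 <= k)%N -> (k < ncoord g)%N -> adj g k.-1 k.
Proof. by move=> H1 H2; rewrite -{2}(prednK (_ : 0 < k)%N) ?adj_alpha_succ; lia. Qed.

Lemma adj_alpha_gen j c : (1 <= j)%N -> (j < ncoord g)%N ->
  (1 <= c)%N -> (c < ncoord g)%N -> adj g j c -> j = c.-1 \/ j = c.+1.
Proof.
move=> H1 H2 H3 H4 /andP [Hjc Hip].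
case: (eqVneq j c.-1) => [->|E1]; first by left.
case: (eqVneq j c.+1) => [->|E2]; first by right.
by rewrite ip_alpha_far ?eqxx in Hip.
Qed.

End Roots.

Section Automorphism.
Variables (g : superalg) (tau : nat -> nat).
Hypothesis Haut : even_diag_aut g tau.

Lemma aut_inR k : inR g k -> inR g (tau k).
Proof. by case: Haut => H _; apply: H. Qed.

Lemma aut_inj i j : inR g i -> inR g j -> tau i = tau j -> i = j.
Proof. by case: Haut => _ [H _]; apply: H. Qed.

Lemma aut_ip i j : inR g i -> inR g j ->
  ip g (alpha g (tau i)) (alpha g (tau j)) = ip g (alpha g i) (alpha g j).
Proof. by case: Haut => _ [_ [H _]]; apply: H. Qed.

Lemma aut_rpar k : inR g k -> rpar g (tau k) = rpar g k.
Proof. by case: Haut => _ [_ [_ H]]; apply: H. Qed.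

Lemma aut_adj i j : inR g i -> inR g j -> adj g (tau i) (tau j) = adj g i j.
Proof.
move=> Hi Hj; rewrite /adj aut_ip //; congr (_ && _).
case: (eqVneq i j) => [->|Hij]; first by rewrite !eqxx.
by apply/eqP => /(aut_inj Hi Hj) E; rewrite E eqxx in Hij.
Qed.

Lemma aut_adj_fixed c j : inR g c -> inR g j -> tau c = c -> adj g j c ->
  adj g (tau j) c.
Proof. by move=> Hc Hj Ec; have := aut_adj Hj Hc; rewrite Ec => ->. Qed.

Lemma aut_path_node_fixed c j : inR g c -> inR g j -> path_node g c -> tau c = c ->
  adj g j c -> tau j = c.-1 \/ tau j = c.+1.
Proof.
by move=> Hc Hj Hnode Ec Hjc; apply: Hnode (aut_inR Hj) (aut_adj_fixed Hc Hj Ec Hjc).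
Qed.

End Automorphism.

Section Path.
Variables (g : superalg) (tau : nat -> nat) (K : nat).
Hypothesis Haut : even_diag_aut g tau.
Hypothesis HK : K <= rk g.
Hypothesis Hchain : forall k, 1 <= k -> k < K -> adj g k k.+1.
Hypothesis Hnode : forall c, 1 <= c -> c < K -> path_node g c.

Lemma fix_path_pred k : 1 <= k -> k.+2 <= K ->
  tau k.+1 = k.+1 -> tau k.+2 = k.+2 -> tau k = k.
Proof.
move=> H1 H2 E1 E2.
have Rk : inR g k by rewrite /inR; lia.
have Rk1 : inR g k.+1 by rewrite /inR; lia.
have Hn : path_node g k.+1 by apply: Hnode; lia.
have [//|E] := aut_path_node_fixed Haut Rk1 Rk Hn E1 (Hchain H1 ltac:(lia)).
have Rk2 : inR g k.+2 by rewrite /inR; lia.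
by have := aut_inj Haut Rk Rk2; rewrite E E2; lia.
Qed.

Lemma fix_path_succ k : 1 <= k -> k.+2 <= K ->
  tau k = k -> tau k.+1 = k.+1 -> tau k.+2 = k.+2.
Proof.
move=> H1 H2 E1 E2.
have Rk : inR g k by rewrite /inR; lia.
have Rk1 : inR g k.+1 by rewrite /inR; lia.
have Rk2 : inR g k.+2 by rewrite /inR; lia.
have Hadj : adj g k.+2 k.+1 by rewrite adj_sym; apply: Hchain; lia.
have Hn : path_node g k.+1 by apply: Hnode; lia.
have [E|//] := aut_path_node_fixed Haut Rk1 Rk2 Hn E2 Hadj.
by have := aut_inj Haut Rk2 Rk; rewrite E E1; lia.
Qed.

Lemma fix_path p : 1 <= p -> p < K -> tau p = p -> tau p.+1 = p.+1 ->
  forall k, 1 <= k <= K -> tau k = k.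
Proof.
move=> Hp HpK E0 E1.
pose P j := tau j = j /\ tau j.+1 = j.+1.
have down d : d < p -> P (p - d).
  elim: d => [|d IH] Hd; first by rewrite subn0.
  have [E2 E3] := IH (ltnW Hd).
  have Ed : (p - d.+1).+1 = p - d by lia.
  by split; rewrite ?Ed //; apply: fix_path_pred; rewrite ?Ed //; lia.
have up d : p + d < K -> P (p + d).
  elim: d => [|d IH] Hd; first by rewrite addn0.
  have [E2 E3] := IH ltac:(lia).
  rewrite addnS; split => //; apply: fix_path_succ => //; lia.
have pair j : 1 <= j -> j < K -> P j.
  move=> Hj1 HjK; case: (leqP j p) => Hjp.
  - by have := down (p - j) ltac:(lia); rewrite subKn.
  - by have := up (j - p) ltac:(lia); rewrite subnKC // ltnW.
move=> k /andP [Hk1 HkK]; case: (ltnP k K) => HkK'; first by case: (pair k Hk1 HkK').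
have -> : k = K.-1.+1 by lia.
by case: (pair K.-1 ltac:(lia) ltac:(lia)).
Qed.

End Path.

Section OrthosymplecticShortTail.
Local Open Scope ring_scope.
Variables (g : superalg) (tau : nat -> nat).
Hypotheses (hm : (1 <= sa_m g)%N) (hn : (1 <= sa_n g)%N).
Hypothesis hk : sa_kind g = OSPodd \/ sa_kind g = SPO.
Hypothesis Haut : even_diag_aut g tau.
Local Notation r := (rk g).
Local Notation sg := (coord_sign g).

(* the tail root is eps_n for osp(2n+1|2m) and 2 eps_n for spo(2n|2m) *)
Definition tail_coef : int := if sa_kind g is SPO then 2 else 1.

Lemma tail_coef_neq0 : tail_coef != 0.
Proof. by rewrite /tail_coef; case: (sa_kind g). Qed.

Lemma os_ncoord : ncoord g = r.
Proof. by rewrite /ncoord /rk; case: hk => ->. Qed.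

Lemma os_rk : r = (sa_m g + sa_n g)%N.
Proof. by rewrite /rk; case: hk => ->. Qed.

Lemma os_alpha_tail c : alpha g r c = tail_coef * (if c == r.-1 then 1 else 0).
Proof.
rewrite /alpha /apair /tail_coef /wsub /zeta /ncoord /dimV /rk /wopp /ebasis.
case: hk => -> /=; rewrite leqnn ltnn.
- have -> : ((2 * sa_n g).+1 + 2 * sa_m g + 1 == 2 * (sa_m g + sa_n g).+1)%N.
    by apply/eqP; lia.
  by rewrite subr0 mul1r.
- have -> : (2 * sa_n g + 2 * sa_m g + 1 == 2 * (sa_m g + sa_n g).+1)%N = false.
    by apply/negbTE; lia.
  have -> : (2 * sa_n g + 2 * sa_m g - (sa_m g + sa_n g).+1 = (sa_m g + sa_n g).-1)%N.
    by lia.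
  by case: eqP => _; rewrite ?subr0 // opprK.
Qed.

Lemma os_sign_last : sg r.-1 = 1.
Proof.
rewrite /coord_sign /vodd os_rk /Neven /dimV ifF //; apply/negbTE; rewrite negb_or.
by case: hk => ->; apply/andP; split; lia.
Qed.

Lemma os_ip_tail_self : ip g (alpha g r) (alpha g r) = tail_coef * tail_coef.
Proof.
rewrite (@ip_single g _ _ r.-1); first by rewrite os_alpha_tail eqxx os_sign_last mulr1 mul1r.
- by rewrite os_ncoord os_rk; lia.
- by move=> c _ Hc; rewrite os_alpha_tail (negbTE Hc) mulr0.
Qed.

Lemma os_adj_tail j : (1 <= j)%N -> (j < r)%N -> adj g j r = (j == r.-1).
Proof.
move=> H1 H2; rewrite /adj ip_alpha_gen ?os_ncoord // !os_alpha_tail.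
rewrite (_ : j.-1 == r.-1 = false); last by apply/negbTE; lia.
rewrite (_ : j != r); last by apply/eqP; lia.
case: (eqVneq j r.-1) => Hj; rewrite !mulr0 ?mulr1 sub0r oppr_eq0 ?eqxx //.
by rewrite mulf_neq0 ?coord_sign_neq0 ?tail_coef_neq0.
Qed.

Lemma os_path_node c : (1 <= c)%N -> (c < r)%N -> path_node g c.
Proof.
move=> H1 H2 j /andP [Hj1 Hj2] Hadj; case: (ltnP j r) => Hjr.
  by apply: (adj_alpha_gen Hj1 _ H1 _ Hadj); rewrite os_ncoord.
right; move: Hadj; rewrite (_ : j = r); last by lia.
by rewrite adj_sym os_adj_tail // => /eqP ->; lia.
Qed.

(* the tail is the only simple root of square length 1 (resp. 4) *)
Lemma os_tau_tail : tau r = r.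
Proof.
have Rr : inR g r by rewrite /inR os_rk; lia.
have /andP [T1 T2] := aut_inR Haut Rr.
case: (ltnP (tau r) r) => T3; last by apply/eqP; rewrite eqn_leq T2.
have := aut_ip Haut Rr Rr; rewrite os_ip_tail_self ip_alpha_self ?os_ncoord //.
by rewrite /tail_coef /coord_sign; case: hk => ->; case: (vodd _ _); case: (vodd _ _).
Qed.

Lemma os_tau_pretail : tau r.-1 = r.-1.
Proof.
have Rr : inR g r by rewrite /inR os_rk; lia.
have Rr1 : inR g r.-1 by rewrite /inR os_rk; lia.
have Hadj : adj g r.-1 r by rewrite os_adj_tail ?eqxx // os_rk; lia.
have := aut_adj_fixed Haut Rr Rr1 os_tau_tail Hadj.
have /andP [T1 T2] := aut_inR Haut Rr1.
case: (ltnP (tau r.-1) r) => T3; first by rewrite os_adj_tail // => /eqP.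
by rewrite (_ : tau r.-1 = r) /adj ?eqxx //; lia.
Qed.

Lemma os_tau_fixed k : inR g k -> tau k = k.
Proof.
have Hr : (2 <= r)%N by rewrite os_rk; lia.
have chain k' : (1 <= k')%N -> (k' < r)%N -> adj g k' k'.+1.
  move=> H1 H2; case: (ltnP k'.+1 r) => H3; first by apply: adj_alpha_succ; rewrite ?os_ncoord.
  have -> : k'.+1 = r by lia.
  by rewrite os_adj_tail //; apply/eqP; lia.
apply: (fix_path Haut (leqnn r) chain os_path_node (p := r.-1)); try lia.
- exact: os_tau_pretail.
- by rewrite prednK ?os_tau_tail //; lia.
Qed.

End OrthosymplecticShortTail.

Section OrthosymplecticEven.
Local Open Scope ring_scope.
Variables (g : superalg) (tau : nat -> nat).
Hypotheses (hm : (1 <= sa_m g)%N) (hn : (1 <= sa_n g)%N).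
Hypothesis hk : sa_kind g = OSPeven.
Hypothesis Haut : even_diag_aut g tau.
Local Notation r := (rk g).
Local Notation m := (sa_m g).
Local Notation sg := (coord_sign g).

Lemma oe_ncoord : ncoord g = r.
Proof. by rewrite /ncoord /rk hk. Qed.

Lemma oe_rk : r = (m + sa_n g)%N.
Proof. by rewrite /rk hk. Qed.

Lemma oe_alpha_tail c : alpha g r c =
  (if c == r.-2 then 1 else 0) + (if c == r.-1 then 1 else 0).
Proof.
rewrite /alpha /apair hk eqxx /= /wsub /zeta /ncoord /dimV /rk /wopp /ebasis hk /= ltnn.
have -> : ((m + sa_n g).-1 <= m + sa_n g)%N by lia.
have -> : (2 * sa_n g + 2 * m + 1 == 2 * (m + sa_n g).+1)%N = false by apply/negbTE; lia.
have -> : (2 * sa_n g + 2 * m - (m + sa_n g).+1 = (m + sa_n g).-1)%N by lia.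
by case: eqP => _; rewrite ?opprK ?oppr0 ?subr0.
Qed.

Lemma oe_sign c : (c < r)%N -> sg c = if (c < m)%N then -1 else 1.
Proof.
move=> Hc; rewrite /coord_sign /vodd /Neven /dimV hk oe_rk in Hc *.
by rewrite (_ : (m + (2 * sa_n g + 2 * m - 2 * m) < c.+1)%N = false) ?orbF //; lia.
Qed.

Lemma oe_rpar k : (1 <= k)%N -> (k < r)%N -> rpar g k = (k == m).
Proof.
move=> H1 H2; rewrite /rpar apair_gen ?oe_ncoord //= /vodd /Neven /dimV hk.
rewrite oe_rk in H2.
rewrite (_ : (m + (2 * sa_n g + 2 * m - 2 * m) < k)%N = false); last by lia.
rewrite (_ : (m + (2 * sa_n g + 2 * m - 2 * m) < k.+1)%N = false); last by lia.
by case: (ltngtP k m) => H; rewrite /= ?orbF.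
Qed.

Lemma oe_rpar_tail : (2 <= sa_n g)%N -> rpar g r = false.
Proof.
move=> H; rewrite /rpar /apair hk eqxx /= /vodd /Neven /dimV hk /rk hk.
rewrite (_ : ((m + sa_n g).-1 <= m)%N = false); last by lia.
rewrite (_ : ((m + sa_n g).+1 <= m)%N = false); last by lia.
rewrite (_ : (m + (2 * sa_n g + 2 * m - 2 * m) < (m + sa_n g).-1)%N = false); last by lia.
by rewrite (_ : (m + (2 * sa_n g + 2 * m - 2 * m) < (m + sa_n g).+1)%N = false); last by lia.
Qed.

Lemma oe_ip_tail_self : ip g (alpha g r) (alpha g r) = sg r.-2 + sg r.-1.
Proof.
have Hr := oe_rk.
rewrite (@ip_pair g _ _ r.-2 r.-1) ?oe_ncoord; try lia.
- by rewrite !oe_alpha_tail; case_eqs; ring.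
- by move=> c _ H1 H2; rewrite oe_alpha_tail (negbTE H1) (negbTE H2) addr0.
Qed.

Lemma oe_adj_tail j : (1 <= j)%N -> (j < r.-1)%N -> adj g j r -> j = r.-2.
Proof.
move=> H1 H2 /andP [_ Hip]; case: (eqVneq j r.-2) => // Hne.
move/eqP: Hip; case; rewrite ip_alpha_gen ?oe_ncoord; try lia.
by rewrite !oe_alpha_tail; case_eqs; ring.
Qed.

Lemma oe_path_node c : (1 <= c)%N -> (c.+3 <= r)%N -> path_node g c.
Proof.
move=> H1 H2 j /andP [Hj1 Hj2] Hadj; case: (ltnP j r) => Hjr.
  by apply: (adj_alpha_gen Hj1 _ H1 _ Hadj); rewrite oe_ncoord; lia.
move: Hadj; rewrite (_ : j = r); last by lia.
by rewrite adj_sym => /oe_adj_tail; lia.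
Qed.

Lemma oe_square_neg2 j : inR g j -> ip g (alpha g j) (alpha g j) = -2 -> (j < m)%N.
Proof.
move=> /andP [H1 H2]; case: (ltnP j r) => H3.
  rewrite ip_alpha_self ?oe_ncoord // !oe_sign; try lia.
  by case: (ltnP j m) => // _; case: ltnP; lia.
rewrite (_ : j = r); last by lia.
rewrite oe_ip_tail_self !oe_sign oe_rk; try lia.
by rewrite (_ : ((m + sa_n g).-1 < m)%N = false); [case: ltnP | lia].
Qed.

Lemma oe_isotropic j : (1 <= j)%N -> (j < r)%N -> ip g (alpha g j) (alpha g j) = 0 -> j = m.
Proof.
move=> H1 H2; rewrite ip_alpha_self ?oe_ncoord // !oe_sign; try lia.
by case: (ltnP j m) => Hj; case: (ltnP j.-1 m) => Hj1; lia.
Qed.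

Lemma oe_tau_delta_pred c : (2 <= c <= m)%N -> (m <= c.+1)%N ->
  tau c = c -> tau c.-1 = c.-1.
Proof.
move=> Hc Hmc Ec; have Hr := oe_rk.
have Rc : inR g c by rewrite /inR; lia.
have Rc1 : inR g c.-1 by rewrite /inR; lia.
have /andP [T1 _] := aut_inR Haut Rc1.
have Hsq : ip g (alpha g (tau c.-1)) (alpha g (tau c.-1)) = -2.
  rewrite aut_ip // ip_alpha_self ?oe_ncoord ?oe_sign; try lia.
  by rewrite !ifT //; lia.
have Tm := oe_square_neg2 (aut_inR Haut Rc1) Hsq.
have Hnc := oe_ncoord.
have Hadj : adj g c.-1 c by apply: adj_alpha_pred; lia.
have Hadj' := aut_adj_fixed Haut Rc Rc1 Ec Hadj.
by case: (adj_alpha_gen (g := g) T1 ltac:(lia) (_ : 1 <= c)%N ltac:(lia) Hadj'); lia.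
Qed.

(* delta_m - eps_1 is the only odd simple root *)
Lemma oe_tau_odd : (2 <= sa_n g)%N -> tau m = m.
Proof.
move=> Hn2.
have Rm : inR g m by rewrite /inR oe_rk; lia.
have /andP [T1 T2] := aut_inR Haut Rm.
have := aut_rpar Haut Rm; rewrite [rpar g m]oe_rpar ?eqxx ?oe_rk; try lia.
case: (ltnP (tau m) r) => T3; first by rewrite oe_rpar // => /eqP.
by rewrite (_ : tau m = r) ?oe_rpar_tail; lia.
Qed.

Lemma oe_fix_path p : (1 <= p)%N -> (p < r - 2)%N -> tau p = p -> tau p.+1 = p.+1 ->
  forall k, (1 <= k <= r - 2)%N -> tau k = k.
Proof.
have chain k : (1 <= k)%N -> (k < r - 2)%N -> adj g k k.+1.
  by move=> H1 H2; apply: adj_alpha_succ; rewrite ?oe_ncoord; lia.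
have node c : (1 <= c)%N -> (c < r - 2)%N -> path_node g c.
  by move=> H1 H2; apply: oe_path_node; lia.
exact: (@fix_path g tau (r - 2) Haut (leq_subr 2 r) chain node p).
Qed.

Lemma oe_tau_D0_wide : (2 <= sa_n g)%N -> forall k, (1 <= k <= r - 2)%N -> tau k = k.
Proof.
move=> Hn2; have Hr := oe_rk; have Em := oe_tau_odd Hn2.
case: (leqP 2 m) => Hm2.
  have Em1 : tau m.-1 = m.-1 by apply: (oe_tau_delta_pred (c := m)) => //; lia.
  by apply: (oe_fix_path (p := m.-1)); rewrite ?prednK //; lia.
move=> k Hk; case: (leqP k 1) => Hk1; first by rewrite (_ : k = m) //; lia.
have R1 : inR g 1 by rewrite /inR oe_rk; lia.
have R2 : inR g 2 by rewrite /inR oe_rk; lia.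
have E1 : tau 1%N = 1%N by rewrite (_ : 1%N = m) //; lia.
have Hadj : adj g 2 1 by rewrite adj_sym adj_alpha_succ ?oe_ncoord; lia.
have Hnode : path_node g 1 by apply: oe_path_node; lia.
have /andP [T1 _] := aut_inR Haut R2.
have E2 : tau 2%N = 2%N by case: (aut_path_node_fixed Haut R1 R2 Hnode E1 Hadj); lia.
by apply: (oe_fix_path (p := 1)); lia.
Qed.

Lemma oe_tau_D0_narrow : sa_n g = 1%N -> forall k, (1 <= k <= r - 2)%N -> tau k = k.
Proof.
move=> Hn1 k Hk; have Hr := oe_rk; have Hnc := oe_ncoord.
have Rm : inR g m by rewrite /inR; lia.
have Rm1 : inR g m.-1 by rewrite /inR; lia.
have Hsq : ip g (alpha g (tau m.-1)) (alpha g (tau m.-1)) = -2.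
  rewrite aut_ip // ip_alpha_self ?oe_sign; try lia.
  by rewrite !ifT //; lia.
have Tm := oe_square_neg2 (aut_inR Haut Rm1) Hsq.
have Em1 : tau m.-1 = m.-1.
  have /andP [U1 U2] := aut_inR Haut Rm.
  case: (ltnP (tau m) r) => U3.
    apply: (oe_tau_delta_pred (c := m)); try lia.
    apply: oe_isotropic => //; rewrite aut_ip // ip_alpha_self ?oe_sign; try lia.
    by rewrite ifT ?ifF //; lia.
  have Hadj : adj g m.-1 m by apply: adj_alpha_pred; lia.
  have /andP [T1 _] := aut_inR Haut Rm1.
  move: Hadj; rewrite -(aut_adj Haut) // (_ : tau m = r); last by lia.
  by move/oe_adj_tail; lia.
case: (leqP k m.-2) => Hk2; last by rewrite (_ : k = m.-1) //; lia.
have Em2 : tau m.-2 = m.-2 by apply: (oe_tau_delta_pred (c := m.-1)); lia.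
apply: (oe_fix_path (p := m.-2)) => //; try lia.
by rewrite (_ : m.-2.+1 = m.-1) //; lia.
Qed.

Lemma oe_tau_D0 k : (1 <= k <= r - 2)%N -> tau k = k.
Proof.
case: (leqP 2 (sa_n g)) => Hn; first exact: oe_tau_D0_wide.
by apply: oe_tau_D0_narrow; lia.
Qed.

End OrthosymplecticEven.

Lemma mem_inL_dom g L k : (k \in [seq k <- iota 1 (rk g) | L k]) = inL g L k.
Proof. by rewrite mem_filter mem_iota add1n ltnS /inL /inR andbC. Qed.

Lemma pseudo_symmetric_aut g L tau : pseudo_symmetric g L tau -> even_diag_aut g tau.
Proof. by case=> _ []. Qed.

Section GeneralLinear.
Local Open Scope ring_scope.
Variables (g : superalg) (L : nat -> bool).
Hypotheses (hm : (1 <= sa_m g)%N) (hn : (1 <= sa_n g)%N).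
Hypothesis hk : sa_kind g = GL.
Local Notation r := (rk g).

Lemma gl_ncoord : ncoord g = r.+1.
Proof. by rewrite /ncoord /rk hk prednK // /dimV hk; lia. Qed.

Lemma gl_dimV : dimV g = ncoord g.
Proof. by rewrite /ncoord hk. Qed.

Lemma gl_path_node c : inR g c -> path_node g c.
Proof.
move=> /andP [H1 H2] j /andP [Hj1 Hj2] Hadj.
by apply: (adj_alpha_gen Hj1 _ H1 _ Hadj); rewrite gl_ncoord.
Qed.

Lemma gl_adj_succ k : (1 <= k)%N -> (k < r)%N -> adj g k k.+1.
Proof. by move=> H1 H2; apply: adj_alpha_succ; rewrite ?gl_ncoord. Qed.

Lemma gl_inspan i j : inspan g L i j =
  has (fun k => sameC g L i k && ((j == k) || (j == k.+1))) (iota 1 r).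
Proof. by rewrite /inspan /compTail /apair hk. Qed.

Lemma gl_wimg i j :
  wimg g L i j = if inspan g L i j then zeta g (span_rev g L i j) else zeta g j.
Proof. by rewrite /wimg /is_gl hk. Qed.

Lemma mem_spanseq i j : (j \in spanseq g L i) = inspan g L i j && (1 <= j <= ncoord g)%N.
Proof. by rewrite /spanseq mem_filter mem_iota gl_dimV add1n ltnS. Qed.

Lemma span_rev_mem i j : j \in spanseq g L i -> span_rev g L i j \in spanseq g L i.
Proof.
move=> Hj; rewrite /span_rev -mem_rev; apply: mem_nth.
by rewrite size_rev index_mem.
Qed.

Lemma wcomp_out i x c : (c < ncoord g)%N -> ~~ inspan g L i c.+1 -> wcomp g L i x c = x c.
Proof.
move=> Hc Hs; rewrite /wcomp (@sum_ord_single _ _ (fun c' => x c' * wimg g L i c'.+1 c) c) //=.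
  by rewrite gl_wimg (negbTE Hs) zeta_coord // eqxx mulr1.
move=> c' Hc' Hne; rewrite gl_wimg; case: ifP => H.
- have Hm : c'.+1 \in spanseq g L i by rewrite mem_spanseq H /=; lia.
  have := span_rev_mem Hm; rewrite mem_spanseq => /andP [H1 H2].
  rewrite zeta_coord //; case: eqP => [E|_]; last by rewrite mulr0.
  by move: Hs; rewrite (_ : c.+1 = span_rev g L i c'.+1) ?H1 //; lia.
- by rewrite zeta_coord //= eq_sym (negbTE Hne) mulr0.
Qed.

Lemma wcomp_supp i x c : (c < ncoord g)%N -> inspan g L i c.+1 ->
  (forall c', (c' < ncoord g)%N -> inspan g L i c'.+1 -> x c' = 0) -> wcomp g L i x c = 0.
Proof.
move=> Hc Hs Hx; rewrite /wcomp big1 // => c' _.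
rewrite gl_wimg; case: ifP => H; first by rewrite Hx // mul0r.
rewrite zeta_coord //=; case: eqP => [E|_]; last by rewrite mulr0.
by move: H; rewrite -E Hs.
Qed.

Definition wL_step (i : nat) (y : weight) : weight :=
  if isrep g L i then wcomp g L i y else y.

Lemma wLE x : wL g L x = foldr wL_step x (iota 1 r).
Proof. by []. Qed.

Lemma wL_out x c : (c < ncoord g)%N ->
  (forall i, isrep g L i -> ~~ inspan g L i c.+1) -> wL g L x c = x c.
Proof.
move=> Hc H; rewrite wLE; elim: (iota 1 r) => //= i s IH.
by rewrite /wL_step; case: ifP => Hr //; rewrite wcomp_out // H.
Qed.

Lemma wL_supp x :
  (forall c i, (c < ncoord g)%N -> isrep g L i -> inspan g L i c.+1 -> x c = 0) ->
  forall c, (c < ncoord g)%N -> wL g L x c = x c.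
Proof.
move=> Hx; rewrite wLE; elim: (iota 1 r) => //= i s IH c Hc.
rewrite /wL_step; case: ifP => Hr; last exact: IH.
case: (boolP (inspan g L i c.+1)) => Hs; last by rewrite wcomp_out // IH.
rewrite wcomp_supp //; first by rewrite (Hx c i).
by move=> c' Hc' Hs'; rewrite IH // (Hx c' i).
Qed.

Lemma isolated_nbrs a : inR g a -> isolated g L a ->
  ~~ inL g L a.-1 /\ ~~ inL g L a.+1.
Proof.
move=> /andP [Ha1 Ha2] Hiso.
split; apply/negP => /[dup] H /andP [/andP [Hk1 Hk2] _]; move: (Hiso _ H).
- by rewrite adj_sym adj_alpha_pred ?gl_ncoord //; lia.
- by rewrite gl_adj_succ //; lia.
Qed.

Lemma inspan_isolated a i j : inR g a -> isolated g L a ->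
  (j == a) || (j == a.+1) -> inspan g L i j -> sameC g L i a.
Proof.
move=> Ra Hiso Hj; rewrite gl_inspan => /hasP [k _ /andP [Hik Hjk]].
have [nLp nLs] := isolated_nbrs Ra Hiso.
have Lk := sameC_inL Hik.
suff Eka : k = a by rewrite -Eka.
case/orP: Hj => /eqP Ej; case/orP: Hjk => /eqP Ek; subst j; try lia.
- by move: Lk; rewrite (_ : k = a.-1) ?(negbTE nLp) //; lia.
- by move: Lk; rewrite -Ek (negbTE nLs).
Qed.

Section Singleton.
Variable a : nat.
Hypothesis Hsing : singleton g L a.

Lemma singleton_inR : inR g a.
Proof. by case: Hsing => /andP []. Qed.

Lemma sameC_singletonl k : sameC g L a k -> k = a.
Proof.
case/andP=> _ /reach_step_first [//|[k' Hk' Hadj]].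
by case: Hsing => _ /(_ k'); rewrite -mem_inL_dom Hadj => /(_ Hk').
Qed.

Lemma sameC_singletonr i : sameC g L i a -> i = a.
Proof.
case/andP=> /andP [Hi _]; rewrite -mem_inL_dom in Hi.
case/(reach_step_last Hi) => [//|[k Hk Hadj]].
by case: Hsing => _ /(_ k); rewrite -mem_inL_dom adj_sym Hadj => /(_ Hk).
Qed.

Lemma sameC_singleton_refl : sameC g L a a.
Proof. by rewrite /sameC; case: Hsing => -> _; case: r => [|n] /=; rewrite eqxx. Qed.

Lemma singleton_isrep : isrep g L a.
Proof.
rewrite /isrep; case: Hsing => -> _ /=; apply/hasPn => k; rewrite mem_iota => Hk.
by apply/negP => /sameC_singletonl; lia.
Qed.

Lemma singleton_inspan j : inspan g L a j = (j == a) || (j == a.+1).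
Proof.
rewrite gl_inspan; apply/hasP/idP => [[k _ /andP [/sameC_singletonl -> ->]] // | Hj].
exists a; last by rewrite sameC_singleton_refl.
by rewrite mem_iota; have /andP := singleton_inR; lia.
Qed.

Lemma not_inspan_singleton i j : i != a -> (j == a) || (j == a.+1) -> ~~ inspan g L i j.
Proof.
move=> Hia Hj; apply/negP.
move=> /(inspan_isolated singleton_inR Hsing.2 Hj) /sameC_singletonr Eia.
by rewrite Eia eqxx in Hia.
Qed.

Lemma singleton_spanseq : spanseq g L a = [:: a; a.+1].
Proof.
have /andP [Ha1 Ha2] := singleton_inR.
rewrite /spanseq (eq_filter singleton_inspan) gl_dimV gl_ncoord.
have -> : r.+1 = (a.-1 + (2 + (r.+1 - a.+1)))%N by lia.
rewrite iotaD filter_cat iotaD filter_cat (_ : (1 + a.-1 = a)%N); last by lia.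
rewrite (eq_in_filter (a2 := pred0)); last first.
  by move=> x; rewrite mem_iota => Hx; apply/negbTE; lia.
rewrite filter_pred0 /= !eqxx orbT /=.
rewrite (eq_in_filter (a2 := pred0)) ?filter_pred0 // => x.
by rewrite mem_iota => Hx; apply/negbTE; lia.
Qed.

Lemma span_rev_singleton : span_rev g L a a = a.+1.
Proof. by rewrite /span_rev singleton_spanseq /= eqxx. Qed.

Lemma span_rev_singleton_succ : span_rev g L a a.+1 = a.
Proof. by rewrite /span_rev singleton_spanseq /= ifF ?eqxx //; apply/negbTE; lia. Qed.

Lemma wcomp_singleton x : wcomp g L a x a.-1 = x a.
Proof.
have /andP [Ha1 Ha2] := singleton_inR.
have Hnc := gl_ncoord.
rewrite /wcomp (@sum_ord_single _ _ (fun c' => x c' * wimg g L a c'.+1 a.-1) a) /=; last 2 first.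
- lia.
- move=> c' Hc' Hne; rewrite gl_wimg singleton_inspan.
  case: (eqVneq c'.+1 a) => [E|Ha] /=.
    by rewrite E span_rev_singleton zeta_coord ?ifF ?mulr0 //; [apply/negbTE|]; lia.
  by rewrite ifF ?zeta_coord ?ifF ?mulr0 //; try apply/negbTE; lia.
rewrite gl_wimg singleton_inspan eqxx orbT span_rev_singleton_succ zeta_coord ?eqxx ?mulr1 //.
lia.
Qed.

(* w_l acts on v_a, v_(a+1) by the transposition, and every other factor of w_l fixes them *)
Lemma wL_singleton x : wL g L x a.-1 = x a.
Proof.
have /andP [Ha1 Ha2] := singleton_inR.
have Hnc := gl_ncoord.
suff S s : uniq s -> (a \notin s -> foldr wL_step x s a = x a) /\
                      (a \in s -> foldr wL_step x s a.-1 = x a).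
  by rewrite wLE; apply: (proj2 (S _ (iota_uniq _ _))); rewrite mem_iota; lia.
elim: s => [|i s IH] //= /andP [Hi Hu]; have [IH1 IH2] := IH Hu.
split.
- rewrite in_cons negb_or => /andP [Hia Has].
  rewrite /wL_step; case: ifP => Hr; last exact: IH1.
  rewrite wcomp_out ?IH1 //; first lia.
  by apply: not_inspan_singleton; [rewrite eq_sym | rewrite eqxx orbT].
- rewrite in_cons; case: (eqVneq a i) => [Ea|Hne] /= Has.
    by rewrite -Ea in Hi *; rewrite /wL_step singleton_isrep wcomp_singleton IH1.
  rewrite /wL_step; case: ifP => Hr; last exact: IH2.
  rewrite wcomp_out ?IH2 //; first lia.
  by rewrite prednK //; apply: not_inspan_singleton; rewrite ?eqxx // eq_sym.
Qed.

End Singleton.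

Section PseudoSymmetric.
Variable tau : nat -> nat.
Hypothesis Hps : pseudo_symmetric g L tau.
Let Haut := pseudo_symmetric_aut Hps.

Lemma gl_fix_adj a b : inR g a -> inR g b -> adj g a b -> tau a = a -> tau b = b ->
  forall k, inR g k -> tau k = k.
Proof.
move=> /andP [Ha1 Ha2] /andP [Hb1 Hb2] Hab Ea Eb.
have Hnc := gl_ncoord.
have node c : (1 <= c)%N -> (c < r)%N -> path_node g c.
  by move=> *; apply: gl_path_node; rewrite /inR; lia.
have Hpath := @fix_path g tau r Haut (leqnn r) gl_adj_succ node.
case: (adj_alpha_gen (g := g) Ha1 ltac:(lia) Hb1 ltac:(lia) Hab) => E.
- by subst a => k Hk; apply: (Hpath b.-1 _ _ _ _ k Hk); rewrite ?prednK //; lia.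
- by subst a => k Hk; apply: (Hpath b _ _ _ _ k Hk) => //; lia.
Qed.

(* tau = -w_l on Pi_l, and w_l(alpha_a) = -alpha_a *)
Lemma singleton_tau_fixed a : singleton g L a -> tau a = a.
Proof.
move=> Hs; have Ra := singleton_inR Hs; have Hnc := gl_ncoord.
case: Hps => _ [_ [Hw _]].
have /andP [Ha1 Ha2] := Ra; have /andP [T1 T2] := aut_inR Haut Ra.
have := Hw a Hs.1 a.-1 ltac:(lia).
rewrite /wopp (wL_singleton Hs) !alpha_gen; try lia.
by case_eqs => //; lia.
Qed.

Lemma ip_isolated_odd b : inLbar g L b -> isolated g L b -> (2 <= b)%N -> (b < r)%N ->
  rpar g b ->
  ip g (wadd (alpha g b) (wL g L (alpha g b)))
       (wsub (alpha g b.-1) (wL g L (alpha g b.+1))) != 0.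
Proof.
move=> Hb Hiso Hb2 Hbr Hodd.
have Rb : inR g b by case/andP: Hb.
have Hnc := gl_ncoord.
have Eb : b.-1.+1 = b by lia.
have nospan i j : (j == b) || (j == b.+1) -> ~~ inspan g L i j.
  move=> Hj; apply/negP => /(inspan_isolated Rb Hiso Hj) /sameC_inL.
  by case/andP: Hb => _ /negbTE; rewrite /inL => ->; rewrite andbF.
have Hfix c : (c < ncoord g)%N -> wL g L (alpha g b) c = alpha g b c.
  apply: wL_supp => {}c i Hc _ Hs; rewrite alpha_gen; try lia.
  case: (eqVneq c b.-1) => [E|Hc1].
    by move: Hs; rewrite E Eb (negbTE (nospan _ _ _)) ?eqxx.
  case: (eqVneq c b) => [E|Hc2]; last by rewrite subrr.
  by move: Hs; rewrite E (negbTE (nospan _ _ _)) // eqxx orbT.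
have Hout c : (c == b.-1) || (c == b) -> wL g L (alpha g b.+1) c = alpha g b.+1 c.
  move=> Hc; apply: wL_out => [|i _]; first by lia.
  by apply: nospan; case/orP: Hc => /eqP ->; rewrite ?Eb eqxx ?orbT.
rewrite (@ip_pair g _ _ b.-1 b); try lia.
  rewrite /wadd /wsub !Hfix ?Hout ?eqxx ?orbT; try lia.
  rewrite !alpha_gen; try lia.
  have Hs : coord_sign g b = - coord_sign g b.-1 by apply: rpar_gen_sign => //; lia.
  rewrite Hs; have := coord_sign_neq0 g b.-1; apply: contra => /eqP.
  by case_eqs; lia.
move=> c Hc H1 H2; rewrite /wadd Hfix // alpha_gen; try lia.
by rewrite (negbTE H1) (negbTE H2); ring.
Qed.

Lemma isolated_odd_tau_fixed b : inLbar g L b -> isolated g L b -> rpar g b -> tau b = b ->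
  forall k, inR g k -> tau k = k.
Proof.
move=> Hb Hiso Hodd Eb; case: Hps => _ [_ [_ [_ Horth]]].
have Rb : inR g b by case/andP: Hb.
have /andP [Hb1 Hbr] := Rb.
case: (leqP 2 b) => Hb2.
  have Rb1 : inR g b.-1 by rewrite /inR; lia.
  have Hadj : adj g b.-1 b by apply: adj_alpha_pred; rewrite ?gl_ncoord.
  have /andP [T1 T2] := aut_inR Haut Rb1.
  case: (aut_path_node_fixed Haut Rb Rb1 (gl_path_node Rb) Eb Hadj) => Eu.
    exact: gl_fix_adj Rb1 Rb Hadj Eu Eb.
  have Lb1 : inLbar g L b.-1.
    by have [nL _] := isolated_nbrs Rb Hiso; move: nL; rewrite /inLbar /inL Rb1.
  have := Horth b b.-1 Hb Lb1; rewrite /tilde Eb Eu => /eqP.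
  by rewrite (negbTE (ip_isolated_odd Hb Hiso _ _ Hodd)) //; lia.
have Hr := gl_ncoord; rewrite /ncoord /dimV hk in Hr.
have R1 : inR g 1 by rewrite /inR; lia.
have R2 : inR g 2 by rewrite /inR; lia.
have E1 : tau 1%N = 1%N by rewrite -{1}(_ : b = 1%N) //; lia.
have Hadj : adj g 2 1 by rewrite adj_sym gl_adj_succ //; lia.
have /andP [T1 _] := aut_inR Haut R2.
case: (aut_path_node_fixed Haut R1 R2 (gl_path_node R1) E1 Hadj) => E2; first by lia.
exact: gl_fix_adj R2 R1 Hadj E2 E1.
Qed.

Lemma singleton_adj_tau_fixed a b : singleton g L a -> inLbar g L b -> tau b = b ->
  ip g (alpha g a) (alpha g b) != 0 -> forall k, inR g k -> tau k = k.
Proof.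
move=> Hs /andP [Rb Lb] Eb Hab.
apply: gl_fix_adj (singleton_inR Hs) Rb _ (singleton_tau_fixed Hs) Eb.
rewrite /adj Hab andbT; apply/eqP => Eab.
by case: Hs => /andP [_]; rewrite Eab (negbTE Lb).
Qed.

Lemma gl_tau_fixed : violates_selection_rules g L tau -> forall k, inR g k -> tau k = k.
Proof.
case=> [[b [a [Hb [_ [_ [_ [Eb [Hab [Hs _]]]]]]]]]|[|[|]]].
- exact: singleton_adj_tau_fixed Hs Hb Eb Hab.
- move=> [_ [b [_ [Hb [Hodd [_ [Eb [Hiso _]]]]]]]].
  exact: isolated_odd_tau_fixed Hb Hiso Hodd Eb.
- move=> [a] [b] [?] [?] [_] [_] [_] [_] [Hb] [_] [_] [_] [Hab].
  move=> [_] [_] [_] [_] [_] [Hs] [_] [_] [Eb _].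
  exact: singleton_adj_tau_fixed Hs Hb Eb Hab.
- by case=> [[Hk _] _]; rewrite hk in Hk.
Qed.

End PseudoSymmetric.

End GeneralLinear.

Theorem mainTheorem15 (g : superalg) (L : nat -> bool) (tau : nat -> nat) :
  1 <= sa_m g -> 1 <= sa_n g ->
  pseudo_symmetric g L tau ->
  violates_selection_rules g L tau ->
  forall k, inD0 g k -> tau k = k.
Proof.
move=> hm hn Hps Hv k; have Haut := pseudo_symmetric_aut Hps.
rewrite /inD0; case E: (sa_kind g) => Hk.
- exact: (gl_tau_fixed hm hn E Hps Hv (k := k) Hk).
- by apply: (os_tau_fixed hm hn (or_introl E) Haut (k := k)); rewrite /inR; lia.
- exact: (oe_tau_D0 hm hn E Haut Hk).
- by apply: (os_tau_fixed hm hn (or_intror E) Haut (k := k)); rewrite /inR; lia.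
Qed.
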